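(* Let $\mathcal O$ be a phylogenetic quiver and let $A$ be a regular vertex of $\mathcal O$. Then the clade $\mathcal O_A$ is a phylogenetic quiver.
   Context: A quiver consists of a class of vertices and, for each ordered pair of vertices $(A,B)$, a set of edges $A\to B$ (loops and multiple edges allowed). An evolution of length $m\ge 0$ is a sequence $A_0\leftarrow A_1\leftarrow\cdots\leftarrow A_m$ of vertices together with edges $A_k\to A_{k-1}$ ($1\le k\le m$); $A_0$ is its initial and $A_m$ its terminal vertex. Write $A\le B$ ($A$ is an ancestor of $B$, $B$ a descendant of $A$) if there is an evolution with initial vertex $A$ and terminal vertex $B$; $A,B$ are isotypic ($A\sim B$) if $A\le B$ and $B\le A$. A vertex $A$ is primitive if every ancestor of $A$ is isotypic to $A$. A full evolution for $X$ is an evolution with primitive initial vertex and terminal vertex $X$. The height $h(X)$ is the smallest length of a full evolution for $X$ ($h(X)=\infty$ if none exists). An evolution $\alpha=(A_0\leftarrow\cdots\leftarrow A_m)$ embeds in $\beta=(B_0\leftarrow\cdots\leftarrow B_n)$ if $m\le n$ and there are integers $0\le r_0<r_1<\cdots<r_m\le n$ with $A_k\sim B_{r_k}$ for all $k$. A universal evolution for $X$ is a full evolution for $X$ that embeds in every full evolution for $X$; $X$ is phylogenetic if it has a universal evolution. A quiver is monotonous if $h(A)\ge h(B)$ for every edge $A\to B$; it is small if the isotypy classes of its vertices form a set; it is phylogenetic if it is small, monotonous, and all its vertices are phylogenetic. The clade $\mathcal O_A$ of a vertex $A$ is the quiver formed by all descendants of $A$ in $\mathcal O$ and all edges of $\mathcal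 O$ between them; heights, primitivity etc. in $\mathcal O_A$ are computed within $\mathcal O_A$. A vertex $A$ is regular if for every $B$ in $\mathcal O_A$ with $h(B)=h(A)$ there is an edge $B\to A$ in $\mathcal O$. *)

From Stdlib Require Import Arith.

Record Quiver := {
  qV : Type;
  qE : qV -> qV -> Type
}.

(* An evolution A_0 <- A_1 <- ... <- A_m : a length m, the vertices
   ev_v 0, ..., ev_v m (values beyond m are irrelevant), and edges
   A_k -> A_{k-1} for 1 <= k <= m. *)
Record evolution (Q : Quiver) := {
  ev_len : nat;
  ev_v : nat -> qV Q;
  ev_e : forall k, 1 <= k <= ev_len -> qE Q (ev_v k) (ev_v (k - 1))
}.
Arguments ev_len {Q} _.
Arguments ev_v {Q} _ _.

Definition initial {Q} (a : evolution Q) : qV Q := ev_v a 0.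
Definition terminal {Q} (a : evolution Q) : qV Q := ev_v a (ev_len a).

Definition ancestor (Q : Quiver) (A B : qV Q) : Prop :=
  exists a : evolution Q, initial a = A /\ terminal a = B.

Definition isotypic (Q : Quiver) (A B : qV Q) : Prop :=
  ancestor Q A B /\ ancestor Q B A.

Definition primitive (Q : Quiver) (A : qV Q) : Prop :=
  forall B, ancestor Q B A -> isotypic Q B A.

Definition full_evolution (Q : Quiver) (X : qV Q) (a : evolution Q) : Prop :=
  primitive Q (initial a) /\ terminal a = X.

(* has_height Q X h : h(X) = h, where None stands for infinity. *)
Definition has_height (Q : Quiver) (X : qV Q) (h : option nat) : Prop :=
  match h with
  | Some n =>
      (exists a, full_evolution Q X a /\ ev_len a = n) /\
      (forall a, full_evolution Q X a -> n <= ev_len a)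
  | None => forall a, ~ full_evolution Q X a
  end.

Definition le_ext (x y : option nat) : Prop :=
  match x, y with
  | _, None => True
  | None, Some _ => False
  | Some m, Some n => m <= n
  end.

Definition embeds (Q : Quiver) (a b : evolution Q) : Prop :=
  ev_len a <= ev_len b /\
  exists r : nat -> nat,
    (forall k, k < ev_len a -> r k < r (S k)) /\
    r (ev_len a) <= ev_len b /\
    (forall k, k <= ev_len a -> isotypic Q (ev_v a k) (ev_v b (r k))).

Definition universal_evolution (Q : Quiver) (X : qV Q) (a : evolution Q) : Prop :=
  full_evolution Q X a /\ forall b, full_evolution Q X b -> embeds Q a b.

Definition phylogenetic_vertex (Q : Quiver) (X : qV Q) : Prop :=
  exists a, universal_evolution Q X a.

Definition monotonous (Q : Quiver) : Prop :=
  forall A B : qV Q, qE Q A B ->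
    forall hA hB, has_height Q A hA -> has_height Q B hB -> le_ext hB hA.

(* small: the isotypy classes form a set; "set" = indexed by a type in Set. *)
Definition small (Q : Quiver) : Prop :=
  exists (I : Set) (f : I -> qV Q), forall v, exists i, isotypic Q (f i) v.

Definition phylogenetic (Q : Quiver) : Prop :=
  small Q /\ monotonous Q /\ forall X, phylogenetic_vertex Q X.

Definition clade (Q : Quiver) (A : qV Q) : Quiver := {|
  qV := { B : qV Q | ancestor Q A B };
  qE := fun x y => qE Q (proj1_sig x) (proj1_sig y)
|}.

Definition regular (Q : Quiver) (A : qV Q) : Prop :=
  forall B, ancestor Q A B ->
    forall h, has_height Q B h -> has_height Q A h -> inhabited (qE Q B A).

From Stdlib Require Import Arith Lia Classical ProofIrrelevance ClassicalEpsilon.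

(* Heights in a phylogenetic quiver are finite; fix the height function h.  For
   X below A, a universal evolution u of X passes at height h A through a
   descendant B of A of height h A, and regularity yields an edge B -> A.  The
   part of u above height h A, preceded by A when B is not isotypic to A, is
   universal for X in the clade: a full evolution of X in the clade becomes one
   in the whole quiver once a shortest full evolution of A is put in front.
   Clade heights are thus h X - h A or h X - h A + 1, and monotonicity reduces to
   excluding the second alternative across an edge between vertices of the same
   height. *)

Section Evolutions.
Variable Q : Quiver.

Lemma evolution_slice (a : evolution Q) i j : i <= j <= ev_len a ->
  exists c : evolution Q, ev_len c = j - i /\ forall k, ev_v c k = ev_v a (i + k).
Proof.
  intro Hij.
  assert (E : forall k, 1 <= k <= j - i -> qE Q (ev_v a (i + k)) (ev_v a (i + (k - 1)))).
  { intros k Hk. replace (i + (k - 1)) with (i + k - 1) by lia. apply (ev_e _ a). lia. }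
  exists (Build_evolution Q (j - i) (fun k => ev_v a (i + k)) E). simpl; auto.
Qed.

Lemma evolution_cat (a b : evolution Q) : terminal a = initial b ->
  exists c : evolution Q, ev_len c = ev_len a + ev_len b /\
    (forall k, k <= ev_len a -> ev_v c k = ev_v a k) /\
    (forall k, ev_v c (ev_len a + k) = ev_v b k).
Proof.
  unfold terminal, initial. intro Hab.
  set (v := fun k => if k <=? ev_len a then ev_v a k else ev_v b (k - ev_len a)).
  assert (Va : forall k, k <= ev_len a -> v k = ev_v a k).
  { intros k Hk. unfold v. apply Nat.leb_le in Hk. rewrite Hk. reflexivity. }
  assert (Vb : forall k, ev_len a <= k -> v k = ev_v b (k - ev_len a)).
  { intros k Hk. unfold v. destruct (Nat.leb_spec k (ev_len a)).
    - replace k with (ev_len a) by lia. rewrite Nat.sub_diag. exact Hab.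
    - reflexivity. }
  assert (E : forall k, 1 <= k <= ev_len a + ev_len b -> qE Q (v k) (v (k - 1))).
  { intros k Hk. destruct (le_lt_dec k (ev_len a)).
    - rewrite !Va by lia. apply (ev_e _ a). lia.
    - rewrite !Vb by lia. replace (k - 1 - ev_len a) with (k - ev_len a - 1) by lia.
      apply (ev_e _ b). lia. }
  exists (Build_evolution Q _ v E). simpl. split; [reflexivity | split; [exact Va |]].
  intro k. rewrite Vb by lia. f_equal. lia.
Qed.

Lemma evolution_edge x y : qE Q y x ->
  exists a : evolution Q, ev_len a = 1 /\ ev_v a 0 = x /\ ev_v a 1 = y.
Proof.
  intro e. set (v := fun k => match k with 0 => x | _ => y end).
  assert (E : forall k, 1 <= k <= 1 -> qE Q (v k) (v (k - 1))).
  { intros k Hk. replace k with 1 by lia. exact e. }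
  exists (Build_evolution Q 1 v E). simpl; auto.
Qed.

Lemma ancestor_refl x : ancestor Q x x.
Proof.
  assert (E : forall k, 1 <= k <= 0 -> qE Q x x) by (intros; exfalso; lia).
  exists (Build_evolution Q 0 (fun _ => x) E). split; reflexivity.
Qed.

Lemma ancestor_trans x y z : ancestor Q x y -> ancestor Q y z -> ancestor Q x z.
Proof.
  intros [a [Ia Ta]] [b [Ib Tb]].
  destruct (evolution_cat a b) as [c [Lc [Va Vb]]]; [congruence |].
  exists c. unfold initial, terminal in *. split.
  - rewrite Va by lia. exact Ia.
  - rewrite Lc, Vb. exact Tb.
Qed.

Lemma ancestor_slice (a : evolution Q) i j : i <= j <= ev_len a ->
  ancestor Q (ev_v a i) (ev_v a j).
Proof.
  intro Hij. destruct (evolution_slice a i j Hij) as [c [Lc Vc]].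
  exists c. unfold initial, terminal. rewrite Lc, !Vc. split; f_equal; lia.
Qed.

Lemma ancestor_edge x y : qE Q y x -> ancestor Q x y.
Proof.
  intro e. destruct (evolution_edge x y e) as [a [La [V0 V1]]].
  exists a. unfold initial, terminal. rewrite La. auto.
Qed.

Lemma isotypic_refl x : isotypic Q x x.
Proof. split; apply ancestor_refl. Qed.

Lemma isotypic_sym x y : isotypic Q x y -> isotypic Q y x.
Proof. intros [Hxy Hyx]; split; assumption. Qed.

Lemma isotypic_trans x y z : isotypic Q x y -> isotypic Q y z -> isotypic Q x z.
Proof. intros [Hxy Hyx] [Hyz Hzy]; split; eapply ancestor_trans; eassumption. Qed.

Lemma full_evolution_cat (p e : evolution Q) :
  primitive Q (initial p) -> terminal p = initial e ->
  exists b, full_evolution Q (terminal e) b /\ ev_len b = ev_len p + ev_len e /\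
    (forall k, k <= ev_len p -> ev_v b k = ev_v p k) /\
    (forall k, ev_v b (ev_len p + k) = ev_v e k).
Proof.
  intros Pp Hpe. destruct (evolution_cat p e Hpe) as [b [Lb [Vp Ve]]].
  exists b. split; [split | auto].
  - unfold initial in *. rewrite Vp by lia. exact Pp.
  - unfold terminal. rewrite Lb, Ve. reflexivity.
Qed.

Lemma increasing_gap (r : nat -> nat) m : (forall k, k < m -> r k < r (S k)) ->
  forall j k, j <= k <= m -> r j + (k - j) <= r k.
Proof.
  intros Hr j k. induction k as [|k IH]; intro Hjk.
  - replace j with 0 by lia. lia.
  - destruct (Nat.eq_dec j (S k)) as [->|Hj]; [lia |].
    specialize (IH ltac:(lia)). specialize (Hr k ltac:(lia)). lia.
Qed.

Lemma embeds_intro (a b : evolution Q) (r : nat -> nat) :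
  (forall k, k < ev_len a -> r k < r (S k)) -> r (ev_len a) <= ev_len b ->
  (forall k, k <= ev_len a -> isotypic Q (ev_v a k) (ev_v b (r k))) ->
  embeds Q a b.
Proof.
  intros Hr Hlen Hiso. pose proof (increasing_gap r _ Hr 0 (ev_len a) ltac:(lia)).
  split; [lia |]. exists r. auto.
Qed.

Lemma universal_has_height X u :
  universal_evolution Q X u -> has_height Q X (Some (ev_len u)).
Proof.
  intros [Fu Uu]. split.
  - exists u. auto.
  - intros a Fa. apply (Uu a Fa).
Qed.

Lemma universal_height_eq X u hX :
  universal_evolution Q X u -> has_height Q X hX -> hX = Some (ev_len u).
Proof.
  intros U. pose proof (universal_has_height X u U) as [[a [Fa La]] Ha].
  destruct hX as [n|]; simpl.
  - intros [[b [Fb Lb]] Hb]. specialize (Ha b Fb). specialize (Hb a Fa). f_equal. lia.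
  - intro Hnone. exfalso. exact (Hnone a Fa).
Qed.

Lemma phylogenetic_height_function :
  (forall X, phylogenetic_vertex Q X) -> exists h, forall X, has_height Q X (Some (h X)).
Proof.
  intro Hphy.
  exists (fun X => ev_len (proj1_sig (constructive_indefinite_description _ (Hphy X)))).
  intro X. apply universal_has_height, proj2_sig.
Qed.

End Evolutions.

Section Heights.
Variables (Q : Quiver) (h : qV Q -> nat).
Hypothesis height_h : forall X, has_height Q X (Some (h X)).
Hypothesis monotone : monotonous Q.

Lemma height_le_len X a : full_evolution Q X a -> h X <= ev_len a.
Proof. intro Fa. exact (proj2 (height_h X) a Fa). Qed.

Lemma height_witness X : exists a, full_evolution Q X a /\ ev_len a = h X.
Proof. exact (proj1 (height_h X)). Qed.

Lemma universal_len X u : universal_evolution Q X u -> ev_len u = h X.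
Proof.
  intro U. pose proof (universal_height_eq Q X u _ U (height_h X)). congruence.
Qed.

Lemma height_mono x y : ancestor Q x y -> h x <= h y.
Proof.
  intros [a [<- <-]]. unfold initial, terminal.
  enough (forall k, k <= ev_len a -> h (ev_v a 0) <= h (ev_v a k)) by auto.
  induction k as [|k IH]; intro Hk; [lia |].
  pose proof (ev_e _ a (S k) ltac:(lia)) as e. rewrite Nat.sub_succ, Nat.sub_0_r in e.
  pose proof (monotone _ _ e _ _ (height_h _) (height_h _)). simpl in *.
  specialize (IH ltac:(lia)). lia.
Qed.

Lemma height_isotypic x y : isotypic Q x y -> h x = h y.
Proof. intros [Hxy Hyx]. apply height_mono in Hxy, Hyx. lia. Qed.

Lemma height_prefix X a : full_evolution Q X a ->
  forall k, k <= ev_len a -> h (ev_v a k) <= k.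
Proof.
  intros [Pa _] k Hk. destruct (evolution_slice Q a 0 k ltac:(lia)) as [c [Lc Vc]].
  replace k with (ev_len c) at 2 by lia. apply height_le_len. split.
  - unfold initial in *. rewrite Vc. exact Pa.
  - unfold terminal. rewrite Vc, Lc. f_equal. lia.
Qed.

Lemma height_minimal_prefix X a : full_evolution Q X a -> ev_len a = h X ->
  forall k, k <= ev_len a -> h (ev_v a k) = k.
Proof.
  intros Fa La k Hk. pose proof (height_prefix X a Fa k Hk).
  destruct (height_witness (ev_v a k)) as [p [[Pp Tp] Lp]].
  destruct (evolution_slice Q a k (ev_len a) ltac:(lia)) as [d [Ld Vd]].
  destruct (full_evolution_cat Q p d Pp) as [b [Fb [Lb _]]].
  { unfold initial. rewrite Tp, Vd, Nat.add_0_r. reflexivity. }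
  replace (terminal d) with X in Fb.
  - apply height_le_len in Fb. lia.
  - unfold terminal. rewrite Vd, Ld, <- (proj2 Fa). unfold terminal. f_equal. lia.
Qed.

End Heights.

Section Clade.
Variables (Q : Quiver) (A : qV Q).
Local Notation C := (clade Q A).

Lemma clade_vertex_eq (x y : qV C) : proj1_sig x = proj1_sig y -> x = y.
Proof. destruct x, y. apply subset_eq_compat. Qed.

Lemma clade_evolution_lift (a : evolution Q) : ancestor Q A (initial a) ->
  exists c : evolution C, ev_len c = ev_len a /\
    forall k, k <= ev_len a -> proj1_sig (ev_v c k) = ev_v a k.
Proof.
  intro HA.
  set (v := fun k => exist (ancestor Q A) (ev_v a (Nat.min k (ev_len a)))
     (ancestor_trans Q _ _ _ HA (ancestor_slice Q a 0 _ (conj (Nat.le_0_l _) (Nat.le_min_r _ _))))).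
  assert (E : forall k, 1 <= k <= ev_len a -> qE C (v k) (v (k - 1))).
  { intros k Hk. simpl.
    rewrite (Nat.min_l k), (Nat.min_l (k - 1)) by lia. apply (ev_e _ a). lia. }
  exists (Build_evolution C (ev_len a) v E). split; [reflexivity |].
  intros k Hk. simpl. rewrite Nat.min_l by lia. reflexivity.
Qed.

Lemma clade_evolution_proj (c : evolution C) :
  exists a : evolution Q, ev_len a = ev_len c /\
    forall k, ev_v a k = proj1_sig (ev_v c k).
Proof.
  assert (E : forall k, 1 <= k <= ev_len c ->
            qE Q (proj1_sig (ev_v c k)) (proj1_sig (ev_v c (k - 1)))).
  { intros k Hk. exact (ev_e _ c k Hk). }
  exists (Build_evolution Q (ev_len c) _ E). simpl; auto.
Qed.

Lemma clade_ancestor (x y : qV C) :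
  ancestor C x y <-> ancestor Q (proj1_sig x) (proj1_sig y).
Proof.
  split.
  - intros [c [Ic Tc]]. destruct (clade_evolution_proj c) as [a [La Va]].
    exists a. unfold initial, terminal in *. rewrite La, !Va, Ic, Tc. auto.
  - intros [a [Ia Ta]]. destruct (clade_evolution_lift a) as [c [Lc Vc]].
    { rewrite Ia. exact (proj2_sig x). }
    exists c. unfold initial, terminal in *. split; apply clade_vertex_eq.
    + rewrite Vc by lia. exact Ia.
    + rewrite Lc, Vc by lia. exact Ta.
Qed.

Lemma clade_isotypic (x y : qV C) :
  isotypic C x y <-> isotypic Q (proj1_sig x) (proj1_sig y).
Proof. unfold isotypic. rewrite !clade_ancestor. reflexivity. Qed.

Lemma clade_primitive (x : qV C) : primitive C x <-> isotypic Q (proj1_sig x) A.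
Proof.
  split.
  - intro Px. set (a := exist (ancestor Q A) A (ancestor_refl Q A) : qV C).
    assert (Hax : ancestor C a x) by (apply clade_ancestor; exact (proj2_sig x)).
    apply isotypic_sym, (clade_isotypic a x), Px, Hax.
  - intros Ix y Hyx. apply clade_isotypic. apply clade_ancestor in Hyx. split; [exact Hyx |].
    eapply ancestor_trans; [apply Ix | exact (proj2_sig y)].
Qed.

Lemma clade_small : small Q -> small C.
Proof.
  intros [I [f Hf]].
  exists {i : I | ancestor Q A (f i)}.
  exists (fun i => exist (ancestor Q A) (f (proj1_sig i)) (proj2_sig i)).
  intro v. destruct (Hf (proj1_sig v)) as [i Hi].
  assert (HAi : ancestor Q A (f i)).
  { eapply ancestor_trans; [exact (proj2_sig v) | apply Hi]. }
  exists (exist _ i HAi). apply clade_isotypic. exact Hi.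
Qed.

End Clade.

Section RegularClade.
Variables (Q : Quiver) (A : qV Q) (h : qV Q -> nat).
Hypothesis height_h : forall X, has_height Q X (Some (h X)).
Hypothesis monotone : monotonous Q.
Hypothesis regular_A : regular Q A.
Hypothesis all_phylogenetic : forall X, phylogenetic_vertex Q X.
Local Notation C := (clade Q A).

(* Prefixing a shortest full evolution of A to an evolution A -> X gives a full
   evolution of X; the universal evolution of X embeds in it, at height h A
   necessarily inside the part descending from A. *)
Lemma universal_through_A X u : ancestor Q A X -> universal_evolution Q X u ->
  h A <= ev_len u /\ ancestor Q A (ev_v u (h A)).
Proof.
  intros HAX U. pose proof (universal_len Q h height_h X u U) as Lu.
  pose proof (height_mono Q h height_h monotone A X HAX) as HhAX.
  destruct (height_witness Q h height_h A) as [p [[Pp Tp] Lp]].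
  destruct HAX as [e [Ie Te]].
  destruct (full_evolution_cat Q p e Pp) as [b [Fb [Lb [_ Ve]]]]; [congruence |].
  rewrite Te in Fb. destruct U as [_ Uu].
  destruct (Uu b Fb) as [_ [r [Rinc [Rlen Riso]]]].
  pose proof (increasing_gap r _ Rinc 0 (h A) ltac:(lia)).
  pose proof (increasing_gap r _ Rinc (h A) (ev_len u) ltac:(lia)).
  split; [lia |].
  eapply ancestor_trans; [| apply (Riso (h A) ltac:(lia))].
  pose proof (ancestor_slice Q e 0 (r (h A) - h A) ltac:(lia)) as He.
  unfold initial in Ie. rewrite Ie, <- Ve in He.
  replace (ev_len p + (r (h A) - h A)) with (r (h A)) in He by lia. exact He.
Qed.

Lemma universal_edge_to_A X u : ancestor Q A X -> universal_evolution Q X u ->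
  inhabited (qE Q (ev_v u (h A)) A).
Proof.
  intros HAX U. destruct (universal_through_A X u HAX U) as [HA HAu].
  assert (Hu : h (ev_v u (h A)) = h A).
  { apply (height_minimal_prefix Q h height_h X u (proj1 U)); [| exact HA].
    exact (universal_len Q h height_h X u U). }
  apply (regular_A _ HAu (Some (h A))); [rewrite <- Hu at 2 |]; apply height_h.
Qed.

Lemma clade_full_extend (X : qV C) (c : evolution C) : full_evolution C X c ->
  exists b, full_evolution Q (proj1_sig X) b /\ ev_len b = h A + ev_len c /\
    (forall j, ev_v b (h A + j) = proj1_sig (ev_v c j)) /\ isotypic Q (ev_v b (h A)) A.
Proof.
  intros [Pc Tc]. apply clade_primitive in Pc.
  destruct (clade_evolution_proj Q A c) as [a [La Va]].
  destruct (height_witness Q h height_h (proj1_sig (initial c))) as [p [[Pp Tp] Lp]].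
  rewrite (height_isotypic Q h height_h monotone _ _ Pc) in Lp.
  destruct (full_evolution_cat Q p a Pp) as [b [Fb [Lb [_ Va']]]].
  { rewrite Tp. unfold initial. rewrite Va. reflexivity. }
  replace (terminal a) with (proj1_sig X) in Fb
    by (unfold terminal; rewrite Va, La, <- Tc; reflexivity).
  rewrite Lp in Lb, Va'.
  exists b. split; [exact Fb | split; [lia | split]].
  - intro j. rewrite Va', Va. reflexivity.
  - rewrite <- (Nat.add_0_r (h A)), Va', Va. exact Pc.
Qed.

(* The embedding of [u] into [c] extended by a shortest full evolution of A,
   shifted down by [h A]; it can only hit position 0 of [c] at index 0 when
   [u] is isotypic to A at height [h A]. *)
Lemma universal_tail_embeds (X : qV C) u c :
  universal_evolution Q (proj1_sig X) u -> full_evolution C X c ->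
  exists r : nat -> nat,
    (forall k, k < ev_len u - h A -> r k < r (S k)) /\
    r (ev_len u - h A) <= ev_len c /\
    (forall k, k <= ev_len u - h A ->
       isotypic Q (ev_v u (h A + k)) (proj1_sig (ev_v c (r k)))) /\
    (~ isotypic Q (ev_v u (h A)) A -> 0 < r 0).
Proof.
  intros U Fc. destruct (universal_through_A _ u (proj2_sig X) U) as [HA _].
  destruct (clade_full_extend X c Fc) as [b [Fb [Lb [Vb Ib]]]].
  destruct (proj2 U b Fb) as [_ [r [Rinc [Rlen Riso]]]].
  assert (Hr : forall k, k <= ev_len u - h A -> r (h A + k) = h A + (r (h A + k) - h A)).
  { intros k Hk. pose proof (increasing_gap r _ Rinc 0 (h A + k) ltac:(lia)). lia. }
  exists (fun k => r (h A + k) - h A). split; [| split; [| split]].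
  - intros k Hk. rewrite Nat.add_succ_r.
    pose proof (Rinc (h A + k) ltac:(lia)). pose proof (Hr k ltac:(lia)). lia.
  - replace (h A + (ev_len u - h A)) with (ev_len u) by lia. lia.
  - intros k Hk. rewrite <- Vb, <- Hr by lia. apply Riso. lia.
  - intros Hnot. apply Nat.neq_0_lt_0. intro Hr0.
    apply Hnot. eapply isotypic_trans; [apply (Riso (h A)); lia |].
    pose proof (Hr 0 ltac:(lia)) as Hr0'. rewrite Nat.add_0_r in Hr0, Hr0'.
    rewrite Hr0', Hr0, Nat.add_0_r. exact Ib.
Qed.

Lemma clade_universal_of_isotypic (X : qV C) u :
  universal_evolution Q (proj1_sig X) u -> isotypic Q (ev_v u (h A)) A ->
  exists s, universal_evolution C X s /\ ev_len s = ev_len u - h A.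
Proof.
  intros U Iu. destruct (universal_through_A _ u (proj2_sig X) U) as [HA HAu].
  destruct (evolution_slice Q u (h A) (ev_len u) ltac:(lia)) as [d [Ld Vd]].
  destruct (clade_evolution_lift Q A d) as [s [Ls Vs]].
  { unfold initial. rewrite Vd, Nat.add_0_r. exact HAu. }
  exists s. split; [split; [split |] | lia].
  - apply clade_primitive. unfold initial. rewrite Vs, Vd, Nat.add_0_r by lia. exact Iu.
  - apply clade_vertex_eq. unfold terminal. rewrite Vs, Vd, Ls, Ld by lia.
    rewrite <- (proj2 (proj1 U)). unfold terminal. f_equal. lia.
  - intros c Fc. destruct (universal_tail_embeds X u c U Fc) as [r [Rinc [Rlen [Riso _]]]].
    apply embeds_intro with r; rewrite Ls, Ld; [exact Rinc | exact Rlen |].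
    intros k Hk. apply clade_isotypic. rewrite Vs, Vd by lia. apply Riso. lia.
Qed.

Lemma clade_universal_of_not_isotypic (X : qV C) u :
  universal_evolution Q (proj1_sig X) u -> ~ isotypic Q (ev_v u (h A)) A ->
  exists s, universal_evolution C X s /\ ev_len s = ev_len u - h A + 1.
Proof.
  intros U Nu. destruct (universal_through_A _ u (proj2_sig X) U) as [HA _].
  destruct (universal_edge_to_A _ u (proj2_sig X) U) as [e].
  destruct (evolution_edge Q A _ e) as [a [La [Va0 Va1]]].
  destruct (evolution_slice Q u (h A) (ev_len u) ltac:(lia)) as [d [Ld Vd]].
  destruct (evolution_cat Q a d) as [ad [Lad [Vada Vadd]]].
  { unfold terminal, initial. rewrite La, Va1, Vd, Nat.add_0_r. reflexivity. }
  rewrite La in Lad, Vada, Vadd.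
  destruct (clade_evolution_lift Q A ad) as [s [Ls Vs]].
  { unfold initial. rewrite Vada, Va0 by lia. apply ancestor_refl. }
  assert (Vs0 : proj1_sig (ev_v s 0) = A) by (rewrite Vs, Vada, Va0 by lia; reflexivity).
  assert (VsS : forall k, k <= ev_len u - h A -> proj1_sig (ev_v s (S k)) = ev_v u (h A + k)).
  { intros k Hk. rewrite Vs by lia. rewrite <- Vd. exact (Vadd k). }
  exists s. split; [split; [split |] | lia].
  - apply clade_primitive. unfold initial. rewrite Vs0. apply isotypic_refl.
  - apply clade_vertex_eq. unfold terminal.
    replace (ev_len s) with (S (ev_len u - h A)) by lia. rewrite VsS by lia.
    rewrite <- (proj2 (proj1 U)). unfold terminal. f_equal. lia.
  - intros c Fc. destruct (universal_tail_embeds X u c U Fc) as [r [Rinc [Rlen [Riso Rpos]]]].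
    specialize (Rpos Nu).
    apply embeds_intro with (fun k => match k with 0 => 0 | S k => r k end).
    + rewrite Ls, Lad. intros [|k] Hk; [exact Rpos | apply Rinc; lia].
    + replace (ev_len s) with (S (ev_len u - h A)) by lia. exact Rlen.
    + intros [|k] Hk; apply clade_isotypic.
      * rewrite Vs0. apply isotypic_sym, clade_primitive, (proj1 Fc).
      * rewrite VsS by lia. apply Riso. lia.
Qed.

Lemma clade_universal (X : qV C) u : universal_evolution Q (proj1_sig X) u ->
  exists s, universal_evolution C X s /\
    (isotypic Q (ev_v u (h A)) A /\ ev_len s = ev_len u - h A \/
     ~ isotypic Q (ev_v u (h A)) A /\ ev_len s = ev_len u - h A + 1).
Proof.
  intro U. destruct (classic (isotypic Q (ev_v u (h A)) A)) as [Iu | Nu].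
  - destruct (clade_universal_of_isotypic X u U Iu) as [s [Us Ls]]. exists s. auto.
  - destruct (clade_universal_of_not_isotypic X u U Nu) as [s [Us Ls]]. exists s. auto.
Qed.

Lemma clade_phylogenetic_vertex (X : qV C) : phylogenetic_vertex C X.
Proof.
  destruct (all_phylogenetic (proj1_sig X)) as [u U].
  destruct (clade_universal X u U) as [s [Us _]]. exists s. exact Us.
Qed.

(* Append the edge [y <- x] to [uy]: the universal evolution of [x] embeds in the
   result, and height considerations force position [h A] to land on [h A], or on
   [h A + 1] only when [h A = h y]. *)
Lemma isotypic_A_along_edge x y (e : qE Q x y) ux uy :
  universal_evolution Q x ux -> universal_evolution Q y uy ->
  h x = h y -> ancestor Q A y ->
  isotypic Q (ev_v ux (h A)) A -> isotypic Q (ev_v uy (h A)) A.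
Proof.
  intros Ux Uy Hxy HAy Ix.
  pose proof (universal_len Q h height_h _ _ Ux) as Lx.
  pose proof (universal_len Q h height_h _ _ Uy) as Ly.
  pose proof (height_mono Q h height_h monotone _ _ HAy) as HhAy.
  destruct Uy as [[Py Ty] _].
  destruct (evolution_edge Q y x e) as [a [La [Va0 Va1]]].
  destruct (full_evolution_cat Q uy a Py) as [w [Fw [Lw [Vwu Vwa]]]].
  { unfold initial. rewrite Va0. exact Ty. }
  replace (terminal a) with x in Fw by (unfold terminal; rewrite La; auto).
  destruct (proj2 Ux w Fw) as [_ [r [Rinc [Rlen Riso]]]].
  pose proof (increasing_gap r _ Rinc 0 (h A) ltac:(lia)).
  pose proof (increasing_gap r _ Rinc (h A) (ev_len ux) ltac:(lia)).
  pose proof (Riso (h A) ltac:(lia)) as I.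
  assert (r (h A) = h A \/ r (h A) = S (h A)) as [Hr | Hr] by lia.
  - rewrite Hr, Vwu in I by lia. apply isotypic_sym in I. exact (isotypic_trans Q _ _ _ I Ix).
  - destruct (le_lt_dec (S (h A)) (h y)).
    + exfalso. rewrite Hr, Vwu in I by lia.
      apply (height_isotypic Q h height_h monotone) in I.
      rewrite (height_minimal_prefix Q h height_h x ux (proj1 Ux) Lx) in I by lia.
      rewrite (height_minimal_prefix Q h height_h y uy (conj Py Ty) Ly) in I by lia. lia.
    + replace (r (h A)) with (ev_len uy + 1) in I by lia. rewrite Vwa, Va1 in I.
      unfold terminal in Ty. replace (ev_v uy (h A)) with y by (rewrite <- Ty; f_equal; lia).
      split; [| exact HAy].
      eapply ancestor_trans; [apply ancestor_edge, e |].
      eapply ancestor_trans; [apply I | apply Ix].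
Qed.

Lemma clade_monotonous : monotonous C.
Proof.
  intros x y e hx hy Hx Hy.
  destruct (all_phylogenetic (proj1_sig x)) as [ux Ux].
  destruct (all_phylogenetic (proj1_sig y)) as [uy Uy].
  destruct (clade_universal x ux Ux) as [sx [Usx Lsx]].
  destruct (clade_universal y uy Uy) as [sy [Usy Lsy]].
  rewrite (universal_height_eq C x sx hx Usx Hx), (universal_height_eq C y sy hy Usy Hy).
  simpl. rewrite (universal_len Q h height_h _ _ Ux) in Lsx.
  rewrite (universal_len Q h height_h _ _ Uy) in Lsy.
  pose proof (height_mono Q h height_h monotone _ _ (ancestor_edge Q _ _ e)).
  pose proof (height_mono Q h height_h monotone _ _ (proj2_sig y)).
  destruct Lsx as [[Ix Lx] | [Ix Lx]], Lsy as [[Iy Ly] | [Iy Ly]]; try lia.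
  destruct (Nat.eq_dec (h (proj1_sig x)) (h (proj1_sig y))) as [Hxy | Hxy]; [| lia].
  exfalso. exact (Iy (isotypic_A_along_edge _ _ e ux uy Ux Uy Hxy (proj2_sig y) Ix)).
Qed.

End RegularClade.

Theorem theorem9p4 (Q : Quiver) (A : qV Q) :
  phylogenetic Q -> regular Q A -> phylogenetic (clade Q A).
Proof.
  intros [Hsmall [Hmono Hphy]] Hreg.
  destruct (phylogenetic_height_function Q Hphy) as [h Hh].
  split; [| split].
  - exact (clade_small Q A Hsmall).
  - exact (clade_monotonous Q A h Hh Hmono Hreg Hphy).
  - exact (clade_phylogenetic_vertex Q A h Hh Hmono Hreg Hphy).
Qed.
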